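(* Let $G$ be a connected undirected graph. Suppose that for every initial vector $v(0)$ with $\|v(0)\|_1\le1$ and every $t\ge1$ there is a non-negative real random variable $F(t,v(0))$, a function of the random edge sequence of length $t$, such that: (i) there exists $C>0$ such that for every $v(0)$ with $\|v(0)\|_1\le1$, every $t\ge1$ and every $w\in\mathbb R^{V(G)}$, $\mathbb E[F(t,v(0))\mid v(t-1)=w]\ge C\|w-\bar v\|_1$; and (ii) $\sum_{t=1}^k F(t,v(0))$ converges in $L^1$ (over random infinite edge sequences), as $k\to\infty$, to a random variable $F(v(0))$. Let $\mathbb E_{\max}=\max_{\|v(0)\|_1\le1}\mathbb E[F(v(0))]$. Then for every $\epsilon>0$, $$t_{\epsilon,1}(G,v(0))\le\frac{8\,\mathbb E[F(v(0))]}{\epsilon^2C}\qquad\text{and}\qquad t_{\epsilon,1}(G)\le\frac{8\,\mathbb E_{\max}}{\epsilon^2C},$$ where $t_{\epsilon,1}(G,v(0))=\min\{t\in\mathbb N:\mathbb E\|v(t)-\bar v\|_1\le\epsilon\}$.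
   Context: The averaging process on a finite, undirected, connected graph $G=(V,E)$, $V=\{1,\dots,n\}$: the state vector $v(t)\in\mathbb R^n$, $t=0,1,2,\dots$, starts from a given $v(0)$; at each step $t\ge 1$ an edge $\{i,j\}\in E$ is chosen uniformly at random (independently of all previous choices) and both $v_i$ and $v_j$ are replaced by $(v_i+v_j)/2$, all other coordinates unchanged. $\bar v=(a,\dots,a)^T$ with $a=\frac1n\sum_i v_i(0)$. $t_{\epsilon,1}(G)$ is the least $t\in\mathbb N$ such that for every $v(0)$ with $\|v(0)\|_1=1$ one has $\mathbb E\|v(t)-\bar v\|_1\le\epsilon$. *)

From HB Require Import structures.
From mathcomp Require Import all_boot all_order all_algebra.
From mathcomp Require Import all_classical all_reals all_analysis.
Set Implicit Arguments. Unset Strict Implicit. Unset Printing Implicit Defensive.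
Import Order.TTheory GRing.Theory Num.Theory.
Local Open Scope ring_scope.

Section Averaging.
Variables (R : realType) (n : nat) (adj : rel 'I_n).

(* The graph G on V = 'I_n is given by a symmetric irreflexive relation adj.
   An (undirected) edge {i,j} is represented by the ordered pair (i,j), i<j. *)
Definition simple_graph : Prop :=
  symmetric adj /\ irreflexive adj.
Definition connected_graph : Prop := forall i j : 'I_n, connect adj i j.

Definition edge := {e : 'I_n * 'I_n | (e.1 < e.2)%N && adj e.1 e.2}.

Definition vec := {ffun 'I_n -> R}.

Definition avg_step (e : edge) (v : vec) : vec :=
  [ffun k => if (k == (val e).1) || (k == (val e).2)
             then (v (val e).1 + v (val e).2) / 2 else v k].

(* v(t) as a function of v(0) and the edge sequence chosen in steps 1..t. *)
Definition traj (v0 : vec) (s : seq edge) : vec := foldl (fun v e => avg_step e v) v0 s.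

Definition norm1 (v : vec) : R := \sum_i `|v i|.

Definition vbar (v0 : vec) : vec := [ffun _ => (\sum_i v0 i) / n%:R].

(* Expectation of a function of the (uniform, independent) first t edges. *)
Definition Eseq (t : nat) (f : t.-tuple edge -> R) : R :=
  (\sum_(s : t.-tuple edge) f s) / (#|{: edge}|%:R ^+ t).

Definition Edist (v0 : vec) (t : nat) : R :=
  Eseq (fun s : t.-tuple edge => norm1 (traj v0 s - vbar v0)).

Definition eprefix (T : Type) (X : nat -> T -> edge) (t : nat) (w : T) : t.-tuple edge :=
  [tuple X (val i) w | i < t].

End Averaging.

From HB Require Import structures.
From mathcomp Require Import all_boot all_order all_algebra.
From mathcomp Require Import all_classical all_reals all_analysis.
From mathcomp Require Import ring lra.
Import Order.TTheory GRing.Theory Num.Theory.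
Local Open Scope classical_set_scope.
Local Open Scope ring_scope.

(* Write D(t) = E ||v(t) - vbar||_1.  An averaging step is an l1-contraction towards
   every constant vector, so D is nonincreasing.  Summing condition (i) over the values
   of v(t) gives C D(t) <= E F(t+1), hence
     (k+1) C D(k) <= C (D(0) + ... + D(k)) <= E (F(1) + ... + F(k+1)) <= E F(v(0)),
   the last step because these nonnegative partial sums tend to F(v(0)) in L^1.  As
   D(0) <= 2, for eps < 2 the time k = floor (E F(v(0)) / (C eps)) has D(k) <= eps
   and k <= 8 E F(v(0)) / (eps^2 C). *)

Section TupleSums.
Variables (T : finType) (M : nmodType).

Lemma sum_tupleS t (phi : t.+1.-tuple T -> M) :
  \sum_(s : t.+1.-tuple T) phi s =
  \sum_(e : T) \sum_(s : t.-tuple T) phi [tuple of e :: s].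
Proof.
rewrite pair_big /= (reindex (fun p : T * t.-tuple T => [tuple of p.1 :: p.2])) //.
exists (fun s => (thead s, [tuple of behead s])).
- by case=> e s _; rewrite /= theadE; congr pair; apply: val_inj.
- by move=> s _; rewrite /= -tuple_eta.
Qed.

Lemma sum_take_tuple (k t : nat) (h : seq T -> M) : (k <= t)%N ->
  \sum_(s : t.-tuple T) h (take k s) = (\sum_(s : k.-tuple T) h s) *+ #|{: T}| ^ (t - k).
Proof.
elim: k t h => [|k IH] t h le_kt.
  rewrite subn0 [LHS](eq_bigr (fun _ => h [::])) => [|s _]; last by rewrite take0.
  rewrite [in RHS](eq_bigr (fun _ => h [::])) => [|s _]; last by rewrite tuple0.
  by rewrite !sumr_const !card_tuple expn0 mulr1n.
case: t le_kt => // t le_kt.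
rewrite !sum_tupleS subSS -sumrMnl; apply: eq_bigr => e _.
exact: (IH t (fun s => h (e :: s))).
Qed.

End TupleSums.

Section Contraction.
Context {R : realType} {n : nat} {adj : rel 'I_n}.

Lemma norm1_ge0 (v : vec R n) : 0 <= norm1 v.
Proof. exact: sumr_ge0. Qed.

Lemma norm1_subr_le (v w : vec R n) : norm1 (v - w) <= norm1 v + norm1 w.
Proof.
rewrite /norm1 -big_split /=; apply: ler_sum => i _.
by rewrite !ffunE ler_normB.
Qed.

Lemma norm1_vbar (v : vec R n) : (0 < n)%N -> norm1 (vbar v) <= norm1 v.
Proof.
move=> n_gt0; rewrite /norm1 /vbar.
under eq_bigr do rewrite ffunE normrM [`|_^-1|]ger0_norm ?invr_ge0 ?ler0n //.
rewrite sumr_const card_ord -[_ *+ n]mulr_natr divfK ?pnatr_eq0 -?lt0n //.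
exact: ler_norm_sum.
Qed.

Lemma norm1_subr_vbar (v : vec R n) : (0 < n)%N -> norm1 (v - vbar v) <= 2 * norm1 v.
Proof.
move=> n_gt0; apply: le_trans (norm1_subr_le _ _) _.
by rewrite mulr2n mulrDl mul1r lerD2l norm1_vbar.
Qed.

(* Averaging two coordinates replaces [|x - a| + |y - a|] by [2 |(x + y)/2 - a|], which is no larger. *)
Lemma norm1_avg_step_const (e : edge adj) (v : vec R n) (a : R) :
  norm1 (avg_step e v - [ffun=> a]) <= norm1 (v - [ffun=> a]).
Proof.
case: e => [[i j] /= e_ij]; have /andP[lt_ij _] := e_ij.
have neq_ij : i != j by rewrite neq_ltn lt_ij.
have split_ij (f : 'I_n -> R) :
    \sum_k f k = f i + f j + \sum_(k | (k != i) && (k != j)) f k.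
  by rewrite (bigD1 i) //= (bigD1 j) 1?eq_sym //= addrA.
rewrite /norm1 !split_ij lerD //.
  rewrite !ffunE /= eqxx (negbTE neq_ij) eq_sym (negbTE neq_ij) eqxx /=.
  have -> : (v i + v j) / 2 - a = ((v i - a) + (v j - a)) / 2 by field.
  rewrite normrM [`|2^-1|]ger0_norm ?invr_ge0 ?ler0n //.
  have := ler_normD (v i - a) (v j - a); lra.
apply: ler_sum => k /andP[neq_ki neq_kj].
by rewrite !ffunE /= (negbTE neq_ki) (negbTE neq_kj).
Qed.

Lemma norm1_traj_const (r : seq (edge adj)) (v : vec R n) (a : R) :
  norm1 (traj v r - [ffun=> a]) <= norm1 (v - [ffun=> a]).
Proof.
elim: r v => [//|e r IH] v /=.
exact: le_trans (IH _) (norm1_avg_step_const e v a).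
Qed.

Lemma traj_cat (v : vec R n) (r1 r2 : seq (edge adj)) :
  traj v (r1 ++ r2) = traj (traj v r1) r2.
Proof. exact: foldl_cat. Qed.

End Contraction.

Section Expectation.
Context {R : realType} {n : nat} {adj : rel 'I_n}.
Local Notation edge := (edge adj).

Lemma Eseq_ge0 t (f : t.-tuple edge -> R) : (forall s, 0 <= f s) -> 0 <= Eseq f.
Proof. by move=> f_ge0; rewrite divr_ge0 ?exprn_ge0 ?ler0n ?sumr_ge0. Qed.

Lemma ler_Eseq t (f g : t.-tuple edge -> R) : (forall s, f s <= g s) -> Eseq f <= Eseq g.
Proof. by move=> le_fg; rewrite ler_wpM2r ?invr_ge0 ?exprn_ge0 ?ler0n ?ler_sum. Qed.

Lemma EseqZ t (c : R) (f : t.-tuple edge -> R) : Eseq (fun s => c * f s) = c * Eseq f.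
Proof. by rewrite /Eseq -mulr_sumr mulrA. Qed.

Lemma Eseq_sum t (I : Type) (r : seq I) (f : I -> t.-tuple edge -> R) :
  Eseq (fun s => \sum_(i <- r) f i s) = \sum_(i <- r) Eseq (f i).
Proof. by rewrite /Eseq -mulr_suml exchange_big. Qed.

Lemma Eseq_partition {t} {K : eqType} (key : t.-tuple edge -> K) (g : t.-tuple edge -> R) :
  Eseq g = \sum_(w <- undup [seq key s | s <- enum {: t.-tuple edge}])
             Eseq (fun s => if key s == w then g s else 0).
Proof.
rewrite -Eseq_sum; congr Eseq; apply: funext => s.
have key_in : key s \in undup [seq key s | s <- enum {: t.-tuple edge}].
  by rewrite mem_undup map_f ?mem_enum.
rewrite (big_rem _ key_in) /= eqxx big1_seq ?addr0 // => w /andP[_ w_in].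
case: eqP w_in => [->|//]; by rewrite mem_rem_uniqF ?undup_uniq.
Qed.

Lemma Edist_ge0 (v0 : vec R n) t : 0 <= Edist adj v0 t.
Proof. by apply: Eseq_ge0 => s; apply: norm1_ge0. Qed.

Lemma Edist0 (v0 : vec R n) : Edist adj v0 0 = norm1 (v0 - vbar v0).
Proof.
rewrite /Edist /Eseq expr0 divr1 (eq_bigr (fun _ => norm1 (v0 - vbar v0))) => [|s _].
  by rewrite sumr_const card_tuple expn0.
by rewrite tuple0.
Qed.

Hypothesis edge_gt0 : (0 < #|{: edge}|)%N.

Lemma Eseq_take (h : seq edge -> R) k t : (k <= t)%N ->
  Eseq (fun s : t.-tuple edge => h (take k s)) = Eseq (fun s : k.-tuple edge => h s).
Proof.
move=> le_kt; have E_neq0 : (#|{: edge}|%:R : R) != 0 by rewrite pnatr_eq0 -lt0n.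
rewrite /Eseq sum_take_tuple // -[(\sum_s _) *+ _]mulr_natr natrX -(subnK le_kt) exprD subnK //.
by field; rewrite !expf_neq0.
Qed.

Lemma Edist_nonincreasing (v0 : vec R n) :
  {homo Edist adj v0 : t t' / (t <= t')%N >-> t' <= t}.
Proof.
move=> t t' le_tt'; rewrite /Edist -(@Eseq_take (fun s => norm1 (traj v0 s - vbar v0)) _ _ le_tt').
apply: ler_Eseq => s; rewrite -[in traj v0 s](cat_take_drop t s) traj_cat.
exact: norm1_traj_const.
Qed.

(* Condition (i), summed over the possible values [w] of [v(t)]. *)
Lemma mulr_Edist_le_Eseq {C : R} {v0 : vec R n} {t} {f : t.+1.-tuple edge -> R} :
  (forall w : vec R n,
    C * norm1 (w - vbar v0) *
      Eseq (fun s : t.+1.-tuple edge => if traj v0 (take t s) == w then 1 else 0)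
    <= Eseq (fun s : t.+1.-tuple edge => if traj v0 (take t s) == w then f s else 0)) ->
  C * Edist adj v0 t <= Eseq f.
Proof.
move=> cond; pose key (s : t.+1.-tuple edge) := traj v0 (take t s).
rewrite (Eseq_partition key f) /Edist.
rewrite -(@Eseq_take (fun s => norm1 (traj v0 s - vbar v0)) _ _ (leqnSn t)).
rewrite -EseqZ (Eseq_partition key); apply: ler_sum => w _.
apply: le_trans (cond w); rewrite -EseqZ.
by apply: ler_Eseq => s; rewrite /key; case: eqP => [->|_]; rewrite ?mulr1 ?mulr0.
Qed.

End Expectation.

Section L1Limit.
Context {d : measure_display} {T : measurableType d} {R : realType}.
Variable mu : {measure set T -> \bar R}.

(* If [f m] tends to [g] in L^1 then [\int f m] tends to [\int g], so a nondecreasing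
   sequence of integrals stays below [\int g]. *)
Lemma integral_le_L1_limit (f : nat -> T -> R) (g : T -> R) :
  (forall m, mu.-integrable setT (EFin \o f m)) -> mu.-integrable setT (EFin \o g) ->
  {homo (fun m => (\int[mu]_x (f m x)%:E)%E) : m m' / (m <= m')%N >-> (m <= m')%E} ->
  (fun m => (\int[mu]_x (`|f m x - g x|)%:E)%E) @ \oo --> 0%E ->
  forall k, (\int[mu]_x (f k x)%:E <= \int[mu]_x (g x)%:E)%E.
Proof.
move=> int_f int_g homo_f cvg_fg k.
have gap_le m : (k <= m)%N ->
    (\int[mu]_x (f k x)%:E - \int[mu]_x (g x)%:E <= \int[mu]_x (`|f m x - g x|)%:E)%E.
  move=> le_km; apply: le_trans (leeB (homo_f _ _ le_km) (lexx _)) _.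
  rewrite -integralB_EFin //; apply: le_trans (lee_abs _) _.
  apply: le_trans (le_abse_integral _ _ _) _ => //.
  exact: measurable_int (integrableB _ (int_f m) int_g).
rewrite -sube_le0 -(cvg_lim (@ereal_hausdorff _) cvg_fg).
apply: lime_ge; first exact: cvgP cvg_fg.
by near=> m; apply: gap_le; near: m; apply: nbhs_infty_ge.
Unshelve. all: by end_near.
Qed.

End L1Limit.

Section RandomEdges.
Context {R : realType} {n : nat} {adj : rel 'I_n}.
Local Notation edge := (edge adj).
Context {d : measure_display} {Omega : measurableType d} {P : probability Omega R}.
Context {X : nat -> Omega -> edge}.
Hypothesis X_meas : forall k (s : k.-tuple edge), measurable [set w | eprefix X k w = s].
Hypothesis X_law : forall k (s : k.-tuple edge),
  P [set w | eprefix X k w = s] = ((#|{: edge}|%:R ^+ k)^-1)%:E.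

Lemma card_edge_gt0 : (0 < #|{: edge}|)%N.
Proof.
have [w _] : [set: Omega] !=set0.
  apply/set0P/eqP => Omega0; have := probability_setT P.
  by rewrite Omega0 measure0 => /(congr1 fine)/eqP; rewrite eq_sym oner_eq0.
by apply/card_gt0P; exists (X 0%N w).
Qed.

Lemma EFin_prefix_indic t (g : t.-tuple edge -> R) (w : Omega) :
  (g (eprefix X t w))%:E =
  (\sum_(s : t.-tuple edge) (g s)%:E * (\1_[set w | eprefix X t w = s] w)%:E)%E.
Proof.
rewrite (bigD1 (eprefix X t w)) //= indicE mem_set // mule1 big1 ?adde0 // => s /negPf ns.
by rewrite indicE memNset ?mule0 //= => /esym/eqP; rewrite ns.
Qed.

Lemma integrable_prefix t (g : t.-tuple edge -> R) :
  P.-integrable setT (fun w => (g (eprefix X t w))%:E).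
Proof.
under eq_fun do rewrite EFin_prefix_indic.
by apply: integrable_sum => // s _; apply: integrableZl => //; apply: integrable_indic.
Qed.

Lemma integral_prefix t (g : t.-tuple edge -> R) :
  (\int[P]_w (g (eprefix X t w))%:E = (Eseq g)%:E)%E.
Proof.
under eq_integral do rewrite EFin_prefix_indic.
rewrite integral_sum // => [|s]; last first.
  by apply: integrableZl => //; apply: integrable_indic.
rewrite (eq_bigr (fun s => (g s / #|{: edge}|%:R ^+ t)%:E)) => [|s _].
  by rewrite sumEFin /Eseq mulr_suml.
rewrite integralZl //; last exact: integrable_indic.
by rewrite integral_indic // setIT EFinM; congr (_ * _)%E; exact: X_law.
Qed.

Lemma sum_Eseq_le_integral {F : forall t, t.-tuple edge -> R} {Finf : Omega -> R} :
  (forall t s, (1 <= t)%N -> 0 <= F t s) ->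
  P.-integrable setT (fun w => (Finf w)%:E) ->
  (fun k => (\int[P]_w (`|\sum_(1 <= t < k.+1) F t (eprefix X t w) - Finf w|)%:E)%E)
    @ \oo --> 0%E ->
  forall k, \sum_(1 <= t < k.+1) Eseq (F t) <= fine (\int[P]_w (Finf w)%:E)%E.
Proof.
move=> F_ge0 int_Finf cvg_F k.
pose S m w := \sum_(1 <= t < m.+1) F t (eprefix X t w).
have int_S m : P.-integrable setT (EFin \o S m).
  rewrite /S /comp; under eq_fun do rewrite -sumEFin.
  by apply: integrable_sum => // t _; apply: integrable_prefix.
have integral_S m : (\int[P]_w (S m w)%:E = (\sum_(1 <= t < m.+1) Eseq (F t))%:E)%E.
  rewrite /S; under eq_integral do rewrite -sumEFin.
  rewrite integral_sum // => [|t]; last exact: integrable_prefix.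
  by rewrite -sumEFin; apply: eq_bigr => t _; apply: integral_prefix.
have S_homo : {homo (fun m => (\int[P]_w (S m w)%:E)%E) : m m' / (m <= m')%N >-> (m <= m')%E}.
  move=> m m' le_mm'; rewrite !integral_S lee_fin [leRHS](@big_cat_nat _ _ _ m.+1) //= ?ltnS //.
  rewrite lerDl big_nat_cond; apply: sumr_ge0 => t /andP[/andP[lt_mt _] _].
  by apply: Eseq_ge0 => s; apply: F_ge0; apply: leq_ltn_trans lt_mt.
rewrite -lee_fin fineK ?integrable_fin_num // -integral_S.
exact: integral_le_L1_limit.
Qed.

Lemma Edist_bound {C : R} {v0 : vec R n} {F : forall t, t.-tuple edge -> R}
    {Finf : Omega -> R} :
  0 <= C ->
  (forall t s, (1 <= t)%N -> 0 <= F t s) ->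
  (forall t (w : vec R n),
    C * norm1 (w - vbar v0) *
      Eseq (fun s : t.+1.-tuple edge => if traj v0 (take t s) == w then 1 else 0)
    <= Eseq (fun s : t.+1.-tuple edge => if traj v0 (take t s) == w then F t.+1 s else 0)) ->
  P.-integrable setT (fun w => (Finf w)%:E) ->
  (fun k => (\int[P]_w (`|\sum_(1 <= t < k.+1) F t (eprefix X t w) - Finf w|)%:E)%E)
    @ \oo --> 0%E ->
  forall k, k.+1%:R * C * Edist adj v0 k <= fine (\int[P]_w (Finf w)%:E)%E.
Proof.
move=> C_ge0 F_ge0 cond int_Finf cvg_F k.
apply: le_trans (sum_Eseq_le_integral F_ge0 int_Finf cvg_F k.+1).
rewrite big_add1 /=.
have -> : k.+1%:R * C * Edist adj v0 k = \sum_(0 <= t < k.+1) C * Edist adj v0 k.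
  by rewrite sumr_const_nat subn0 mulr_natl mulrnAl.
apply: ler_sum_nat => t /= lt_tk.
apply: le_trans _ (mulr_Edist_le_Eseq card_edge_gt0 (cond t)).
by rewrite ler_wpM2l // Edist_nonincreasing // card_edge_gt0.
Qed.

End RandomEdges.

Lemma exists_uniform_time {R : realType} {I : Type} (D : I -> nat -> R) {M C eps : R} :
  0 < C -> 0 < eps -> 0 <= M ->
  (forall i k, k.+1%:R * C * D i k <= M) -> (forall i, D i 0%N <= 2) ->
  exists t : nat, t%:R <= 8 * M / (eps ^+ 2 * C) /\ forall i, D i t <= eps.
Proof.
move=> C_gt0 eps_gt0 M_ge0 D_le D0_le.
have [eps_ge2|eps_lt2] := leP 2 eps.
  exists 0%N; split=> [|i]; last exact: le_trans (D0_le i) eps_ge2.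
  by rewrite divr_ge0 ?mulr_ge0 ?exprn_ge0 // ltW.
pose y := M / (C * eps); have Ceps_gt0 : 0 < C * eps by rewrite mulr_gt0.
have /andP[le_ty lt_yt] := truncn_itv (divr_ge0 M_ge0 (ltW Ceps_gt0)).
exists (Num.truncn y); split.
  apply: le_trans le_ty _.
  have -> : 8 * M / (eps ^+ 2 * C) = y * (8 / eps) by rewrite /y; field; rewrite ?gt_eqF.
  apply: ler_peMr; first exact: divr_ge0 M_ge0 (ltW Ceps_gt0).
  by rewrite ler_pdivlMr // mul1r; lra.
move=> i; set a := (Num.truncn y).+1%:R in lt_yt.
have a_gt0 : 0 < a by rewrite ltr0n.
rewrite -(ler_pM2l (mulr_gt0 a_gt0 C_gt0)); apply: le_trans (D_le i _) _.
have -> : M = y * (C * eps) by rewrite divfK // gt_eqF.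
by rewrite -mulrA ler_pM2r // ltW.
Qed.

Theorem proposition6
  (R : realType) (n : nat) (adj : rel 'I_n)
  (Hn : (1 < n)%N) (Hsimple : simple_graph adj) (Hconn : connected_graph adj)
  (* the random infinite edge sequence: X i is the edge chosen at step i+1;
     the X i are i.i.d. uniform on the edge set *)
  (d : measure_display) (Omega : measurableType d) (P : probability Omega R)
  (X : nat -> Omega -> edge adj)
  (HX_meas : forall (k : nat) (s : k.-tuple (edge adj)),
      measurable [set w | eprefix X k w = s])
  (HX_law : forall (k : nat) (s : k.-tuple (edge adj)),
      P [set w | eprefix X k w = s] = ((#|{: edge adj}|%:R ^+ k)^-1)%:E)
  (* F t v0 : F(t, v(0)), a function of the first t edges *)
  (F : forall t : nat, vec R n -> t.-tuple (edge adj) -> R)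
  (* Finf v0 : F(v(0)), a random variable on the infinite edge sequences *)
  (Finf : vec R n -> Omega -> R)
  (C : R) (HC : 0 < C)
  (HFnonneg : forall (v0 : vec R n) (t : nat) (s : t.-tuple (edge adj)),
      norm1 v0 <= 1 -> (1 <= t)%N -> 0 <= F t v0 s)
  (* (i): E[F(t,v0) | v(t-1) = w] >= C ||w - vbar||_1, written as
     E[F(t,v0) 1_{v(t-1)=w}] >= C ||w - vbar||_1 P(v(t-1)=w) *)
  (Hi : forall (v0 : vec R n) (t : nat) (w : vec R n),
      norm1 v0 <= 1 -> (1 <= t)%N ->
      Eseq (fun s : t.-tuple (edge adj) =>
              if traj v0 (take t.-1 s) == w then F t v0 s else 0)
      >= C * norm1 (w - vbar v0) *
         Eseq (fun s : t.-tuple (edge adj) =>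
              if traj v0 (take t.-1 s) == w then 1 else 0))
  (* (ii): sum_{t=1}^k F(t,v0) --> F(v0) in L^1 *)
  (Hii_int : forall v0 : vec R n, norm1 v0 <= 1 ->
      P.-integrable setT (fun w => (Finf v0 w)%:E))
  (Hii_cvg : forall v0 : vec R n, norm1 v0 <= 1 ->
      (fun k : nat => (\int[P]_w
          (`| \sum_(1 <= t < k.+1) F t v0 (eprefix X t w) - Finf v0 w |)%:E)%E)
        @ \oo --> 0%E)
  (Emax : R)
  (HEmax : (exists2 v0 : vec R n, norm1 v0 <= 1 &
              fine (\int[P]_w (Finf v0 w)%:E)%E = Emax) /\
           (forall v0 : vec R n, norm1 v0 <= 1 ->
              fine (\int[P]_w (Finf v0 w)%:E)%E <= Emax)) :
  (forall (eps : R) (v0 : vec R n), 0 < eps -> norm1 v0 <= 1 ->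
     exists t : nat,
       t%:R <= 8 * fine (\int[P]_w (Finf v0 w)%:E)%E / (eps ^+ 2 * C) /\
       Edist adj v0 t <= eps)
  /\
  (forall eps : R, 0 < eps ->
     exists t : nat,
       t%:R <= 8 * Emax / (eps ^+ 2 * C) /\
       (forall v0 : vec R n, norm1 v0 = 1 -> Edist adj v0 t <= eps)).
Proof.
have bound (v0 : vec R n) : norm1 v0 <= 1 -> forall k,
    k.+1%:R * C * Edist adj v0 k <= fine (\int[P]_w (Finf v0 w)%:E)%E.
  move=> v0_le1; apply: (Edist_bound (F := fun t => F t v0) HX_meas HX_law (ltW HC)).
  - by move=> t s; apply: HFnonneg.
  - by move=> t w; apply: Hi.
  - exact: Hii_int.
  - exact: Hii_cvg.
have Edist0_le2 (v0 : vec R n) : norm1 v0 <= 1 -> Edist adj v0 0 <= 2.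
  by move=> v0_le1; rewrite Edist0; apply: le_trans (norm1_subr_vbar _ (ltnW Hn)) _; lra.
have M_ge0 (v0 : vec R n) : norm1 v0 <= 1 -> 0 <= fine (\int[P]_w (Finf v0 w)%:E)%E.
  move=> v0_le1; apply: le_trans (bound v0 v0_le1 0%N).
  by rewrite mulr_ge0 ?Edist_ge0 // mul1r ltW.
split=> [eps v0 eps_gt0 v0_le1 | eps eps_gt0].
  have [t [t_le Dt_le]] := exists_uniform_time (fun _ : unit => Edist adj v0)
    HC eps_gt0 (M_ge0 v0 v0_le1) (fun _ => bound v0 v0_le1) (fun _ => Edist0_le2 v0 v0_le1).
  by exists t; split; last exact: Dt_le tt.
have [[v1 v1_le1 <-] le_Emax] := HEmax.
pose I := {v0 : vec R n | norm1 v0 <= 1}.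
have [t [t_le Dt_le]] := exists_uniform_time (fun v : I => Edist adj (val v)) HC eps_gt0
  (M_ge0 v1 v1_le1) (fun v k => le_trans (bound _ (valP v) k) (le_Emax _ (valP v)))
  (fun v => Edist0_le2 _ (valP v)).
exists t; split=> // v0 v0_eq1.
have v0_le1 : norm1 v0 <= 1 by rewrite v0_eq1.
exact: Dt_le (exist _ v0 v0_le1).
Qed.
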